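(* Let $\theta:H\to H$ be an endomorphism and let $E$ be a proper hyperideal of $H$. If $E$ is an $n$-ary Endo-prime hyperideal associated with $\theta$, then $rad(E)$ is an $n$-ary Endo-prime hyperideal associated with $\theta$.
   Context: Throughout, $(H,h,k)$ is a commutative Krasner $(m,n)$-hyperring with scalar identity $1_H$: $(H,h)$ is a canonical $m$-ary hypergroup (a commutative associative $m$-ary hyperoperation $h:H^m\to\mathcal P^*(H)$ with a unique zero $0$ such that $h(u,0^{(m-1)})=\{u\}$, unique inverses $u^{-1}$ with $0\in h(u,u^{-1},0^{(m-2)})$, and the reversibility axiom), $k:H^n\to H$ is a commutative associative $n$-ary operation that distributes over $h$ in each argument, $k(0,u_2^n)=0$, and $k(u,1_H^{(n-1)})=u$ for all $u\in H$. Notation: $u_i^j$ denotes the sequence $u_i,\dots,u_j$ (empty if $j<i$); $u^{(t)}$ denotes $u$ repeated $t$ times; for $r=l(n-1)+1$, $k_{(l)}(u_1^r)=k(k(\cdots k(k(u_1^n),u_{n+1}^{2n-1})\cdots),u_{r-n+1}^{r})$ ($l$ nested applications of $k$). Operations are extended to subsets elementwise. A hyperideal of $H$ is a nonempty $I\subseteq H$ such that $(I,h)$ is an $m$-ary subhypergroup of $(H,h)$ and $k(u_1^{i-1},I,u_{i+1}^n)\subseteq I$ for all $u_j\in H$. An endomorphism of $H$ is a map $\theta:H\to H$ with $\theta(h(u_1^m))=h(\theta(u_1),\dots,\theta(u_m))$, $\theta(k(u_1^n))=k(\theta(u_1),\dots,\theta(u_n))$ and $\theta(1_H)=1_H$.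 ''A power of $u$ lies in $E$'' means $k(u^{(r)},1_H^{(n-r)})\in E$ for some $r\le n$, or $k_{(l)}(u^{(r)})\in E$ for some $r=l(n-1)+1>n$. A proper hyperideal $P$ is an $n$-ary prime hyperideal if $k(u_1^n)\in P$ ($u_i\in H$) implies $u_i\in P$ for some $i$. The radical $rad(E)$ is the intersection of all $n$-ary prime hyperideals containing $E$ ($rad(E)=H$ if there are none); equivalently $rad(E)=\{u\in H:\text{a power of }u\text{ lies in }E\}$. For an endomorphism $\theta$, a proper hyperideal $E$ of $H$ is an $n$-ary Endo-prime hyperideal associated with $\theta$ if for all $u_1,\dots,u_n\in H$, $k(u_1^n)\in E$ implies that for some $i\in\{1,\dots,n\}$, $u_i\in E$ or $\theta\big(k(u_1^{i-1},1_H,u_{i+1}^n)\big)\in E$. *)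

(* A Krasner (m,n)-hyperring is encoded by explicit data:
     h : seq H -> (H -> Prop)   the m-ary hyperoperation (meaningful on lists of size m)
     k : seq H -> H             the n-ary operation (meaningful on lists of size n)
     zr : H                     the zero,  one : H  the scalar identity 1_H.
   Subsets of H are predicates H -> Prop.  Indices are 0-based. *)
From Stdlib Require Import Sorting.Permutation.
From mathcomp Require Import all_boot.

Set Implicit Arguments.
Unset Strict Implicit.
Unset Printing Implicit Defensive.

Section Hyperring.
Variables (H : Type) (m n : nat) (h : seq H -> H -> Prop) (k : seq H -> H)
          (zr one : H).

Definition hS (L : seq (H -> Prop)) (w : H) : Prop :=
  exists l : seq H, List.Forall2 (fun x A => A x) l L /\ h l w.

Definition sing (x : H) : H -> Prop := fun y => y = x.

Definition is_inv (u v : H) : Prop := h [:: u, v & nseq (m - 2) zr] zr.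

Definition canonical_mary_hypergroup : Prop :=
  (forall s, size s = m -> exists w, h s w) /\
  (forall x : seq H, size x = (2 * m - 1)%N -> forall i j, i < m -> j < m ->
     forall w,
       hS (map sing (take i x) ++ [:: h (take m (drop i x))] ++ map sing (drop (i + m) x)) w
       <->
       hS (map sing (take j x) ++ [:: h (take m (drop j x))] ++ map sing (drop (j + m) x)) w) /\
  (forall s t, size s = m -> Permutation s t -> forall w, h s w <-> h t w) /\
  (forall u w, h (u :: nseq (m - 1) zr) w <-> w = u) /\
  (forall z', (forall u w, h (u :: nseq (m - 1) z') w <-> w = u) -> z' = zr) /\
  (forall u, exists v, is_inv u v /\ forall v', is_inv u v' -> v' = v) /\
  (forall (u : H) (us ws : seq H), size us = m -> size ws = m ->
     (forall j, j < m -> is_inv (nth zr us j) (nth zr ws j)) ->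
     h us u ->
     forall i, i < m -> h (u :: (take i ws ++ drop i.+1 ws)) (nth zr us i)).

Definition krasner_hyperring : Prop :=
  canonical_mary_hypergroup /\
  (forall s t, size s = n -> Permutation s t -> k s = k t) /\
  (forall x : seq H, size x = (2 * n - 1)%N -> forall i j, i < n -> j < n ->
     k (take i x ++ [:: k (take n (drop i x))] ++ drop (i + n) x) =
     k (take j x ++ [:: k (take n (drop j x))] ++ drop (j + n) x)) /\
  (forall (us xs : seq H) i, size us = n -> size xs = m -> i < n ->
     forall w, (exists y, h xs y /\ w = k (set_nth zr us i y)) <->
               h (map (fun x => k (set_nth zr us i x)) xs) w) /\
  (forall us, size us = (n - 1)%N -> k (zr :: us) = zr) /\
  (forall u, k (u :: nseq (n - 1) one) = u).

Definition subhypergroup (I : H -> Prop) : Prop :=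
  (forall s, size s = m -> (forall j, j < m -> I (nth zr s j)) -> forall w, h s w -> I w) /\
  (forall s, size s = m -> (forall j, j < m -> I (nth zr s j)) -> forall i, i < m ->
     forall w, I w <-> exists y, I y /\ h (set_nth zr s i y) w).

Definition hyperideal (I : H -> Prop) : Prop :=
  (exists x, I x) /\ subhypergroup I /\
  (forall us i x, size us = n -> i < n -> I x -> I (k (set_nth zr us i x))).

Definition proper_subset (I : H -> Prop) : Prop := exists u, ~ I u.

Definition endomorphism (th : H -> H) : Prop :=
  (forall us, size us = m -> forall w,
     (exists y, h us y /\ w = th y) <-> h (map th us) w) /\
  (forall us, size us = n -> th (k us) = k (map th us)) /\
  th one = one.

Definition nary_prime (P : H -> Prop) : Prop :=
  hyperideal P /\ proper_subset P /\
  forall us, size us = n -> P (k us) -> exists2 i, i < n & P (nth zr us i).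

(* rad(E) = intersection of all n-ary prime hyperideals containing E
   (= H when there is none) *)
Definition rad (E : H -> Prop) : H -> Prop :=
  fun u => forall P, nary_prime P -> (forall x, E x -> P x) -> P u.

Definition endo_prime (th : H -> H) (E : H -> Prop) : Prop :=
  hyperideal E /\ proper_subset E /\
  forall us, size us = n -> E (k us) ->
    exists2 i, i < n & (E (nth zr us i) \/ E (th (k (set_nth zr us i one)))).

End Hyperring.

(* The radical rad(E) is the intersection of the n-ary primes above E, and the
   n-ary primes are exactly the hyperideals P with 1 \notin P that are prime for the
   binary product k(x, y, 1^(n-2)).  By Zorn's lemma, every multiplicative set S
   disjoint from E is avoided by some prime above E.  Suppose k(u_1^n) lies in
   rad(E) but no index witnesses the Endo-prime condition for rad(E).  Let S be
   the set of all k(v_1^n) such that every prime above E containing v_i, resp.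
   theta(k(v_1^n)[v_i := 1]), also contains u_i, resp. theta(k(u_1^n)[u_i := 1]).
   S is multiplicative since theta preserves products, contains k(u_1^n), and is
   disjoint from E because E is Endo-prime; a prime above E avoiding S then
   cannot contain k(u_1^n), contradicting k(u_1^n) \in rad(E). *)

From Stdlib Require Import Sorting.Permutation Classical Lia.
From mathcomp Require Import all_boot zify.
From mathcomp Require classical_sets.

Set Implicit Arguments.
Unset Strict Implicit.
Unset Printing Implicit Defensive.

Lemma perm_set_nth (T : Type) (x0 y : T) (s : seq T) i : i < size s ->
  Permutation (set_nth x0 s i y) (y :: (take i s ++ drop i.+1 s)).
Proof.
move=> lt_i_s; rewrite set_nthE lt_i_s.
by apply: Permutation_sym; apply: Permutation_middle.
Qed.

Lemma nth_take_cat_dropS (T : Type) (x0 : T) (s : seq T) i j :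
  nth x0 (take i s ++ drop i.+1 s) j = nth x0 s (if j < i then j else j.+1).
Proof.
elim: s i j => [|a s IHs] [|i] [|j] //=; rewrite ?nth_nil ?drop0 //.
by rewrite IHs ltnS; case: ifP.
Qed.

Lemma nseq_rcons (T : Type) (x : T) j : rcons (nseq j x) x = nseq j.+1 x.
Proof. by elim: j => //= j ->. Qed.

Lemma size_set_nth_lt (T : Type) (x0 y : T) (s : seq T) i :
  i < size s -> size (set_nth x0 s i y) = size s.
Proof. by move=> lt_i_s; rewrite size_set_nth; apply/maxn_idPr. Qed.

Section KrasnerHyperring.

Variables (H : Type) (m' n' : nat) (h : seq H -> H -> Prop) (k : seq H -> H)
          (zr one : H).
Local Notation M := m'.+2.
Local Notation N := n'.+2.
Hypothesis KR : krasner_hyperring M N h k zr one.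

Let h_nonempty : forall s, size s = M -> exists w, h s w := KR.1.1.
Let h_perm : forall s t, size s = M -> Permutation s t ->
  forall w, h s w <-> h t w := KR.1.2.2.1.
Let inv_exists_unique := KR.1.2.2.2.2.2.1.
Let h_reversible := KR.1.2.2.2.2.2.2.
Let k_perm : forall s t, size s = N -> Permutation s t -> k s = k t := KR.2.1.
Let k_assoc := KR.2.2.1.
Let k_distr := KR.2.2.2.1.
Let k_zero := KR.2.2.2.2.1.
Let k_one : forall u, k (u :: nseq (N - 1) one) = u := KR.2.2.2.2.2.

(* By associativity, k is the n-fold iterate of this binary product. *)
Definition mul x y := k [:: x, y & nseq n' one].
Local Notation inv := (is_inv M h zr).

Lemma mulC x y : mul x y = mul y x.
Proof. by apply: k_perm; [rewrite /= size_nseq | apply: perm_swap]. Qed.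

Lemma mulr1 x : mul x one = x.
Proof. by have := k_one x; rewrite subn1. Qed.

Lemma mul0r x : mul zr x = zr.
Proof. by apply: k_zero; rewrite /= size_nseq subn1. Qed.

Lemma k_cons a s : size s = n'.+1 -> k (a :: s) = mul a (k (one :: s)).
Proof.
move=> size_s.
have size_x : size ((a :: nseq n'.+1 one) ++ s) = 2 * N - 1.
  by rewrite size_cat /= size_nseq size_s; lia.
have x_split : (a :: nseq n'.+1 one) ++ s = (a :: nseq n' one) ++ one :: s.
  by rewrite -nseq_rcons /= cat_rcons.
have size_head j : size (a :: nseq j one) = j.+1 by rewrite /= size_nseq.
have := k_assoc size_x (i := 0) (j := n'.+1) isT (ltnSn _).
rewrite take0 drop0 add0n (take_size_cat _ (size_head _)) (drop_size_cat _ (size_head _)).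
have -> : k (a :: nseq n'.+1 one) = a by have := k_one a; rewrite subn1.
rewrite x_split (take_size_cat _ (size_head _)) (drop_size_cat _ (size_head _)).
rewrite take_oversize /= ?size_s // drop_oversize; last first.
  by rewrite size_cat /= size_nseq size_s; lia.
rewrite /mul => ->; apply: k_perm; first by rewrite /= size_cat size_nseq addn1.
by constructor; rewrite -cat1s; apply: Permutation_app_comm.
Qed.

Lemma mulA a b c : mul a (mul b c) = mul (mul a b) c.
Proof.
have size_ab : size [:: a, b & nseq n' one] = N by rewrite /= size_nseq.
have size_bc : size (b :: rcons (nseq n' one) c) = N by rewrite /= size_rcons size_nseq.
have size_x : size ([:: a, b & nseq n' one] ++ c :: nseq n' one) = 2 * N - 1.
  by rewrite size_cat size_ab /= size_nseq; lia.
have x_split : [:: a, b & nseq n' one] ++ c :: nseq n' one =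
               [:: a] ++ (b :: rcons (nseq n' one) c) ++ nseq n' one.
  by rewrite /= cat_rcons.
have := k_assoc size_x (i := 0) (j := 1) isT isT.
rewrite take0 drop0 add0n (take_size_cat _ size_ab) (drop_size_cat _ size_ab).
rewrite x_split (take_size_cat _ (_ : size [:: a] = 1)) //.
rewrite (drop_size_cat _ (_ : size [:: a] = 1)) // (take_size_cat _ size_bc).
rewrite add1n /= (drop_size_cat _ (_ : size (rcons _ c) = n'.+1)) ?size_rcons ?size_nseq //.
rewrite /mul => ->; congr k; congr cons; congr cons.
apply: k_perm => //.
by constructor; rewrite -cats1; apply: Permutation_cons_append.
Qed.

Lemma mulCA a b c : mul a (mul b c) = mul b (mul a c).
Proof. by rewrite mulA (mulC a b) -mulA. Qed.

Definition prod (s : seq H) := foldr mul one s.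

Lemma prod_perm s t : Permutation s t -> prod s = prod t.
Proof. by elim=> //= [x s1 s2 _ -> | x y s1 | s1 s2 s3 _ -> _ ->] //; exact: mulCA. Qed.

Lemma k_prod s : size s = N -> k s = prod s.
Proof.
suff k_pad j t : j + size t = N -> k (nseq j one ++ t) = prod t.
  by move=> size_s; apply: (k_pad 0); rewrite size_s.
elim: t j => [|a t IHt] j /=.
  by rewrite addn0 cats0 => ->; have := k_one one; rewrite subn1.
move=> size_t; rewrite addnS in size_t.
rewrite (k_perm (t := a :: (nseq j one ++ t))); first last.
- by apply: Permutation_sym; apply: Permutation_middle.
- by rewrite size_cat size_nseq /= addnS.
rewrite k_cons; last by rewrite size_cat size_nseq; case: size_t.
by rewrite -(IHt j.+1) // addSn.
Qed.

Lemma prod_zip s t : size s = size t ->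
  prod [seq mul p.1 p.2 | p <- zip s t] = mul (prod s) (prod t).
Proof.
elim: s t => [|x s IHs] [|y t] //=; first by rewrite mulr1.
by case=> /IHs ->; rewrite -!mulA (mulCA y).
Qed.

Lemma inv_sym u v : inv u v -> inv v u.
Proof.
have size_uv : size [:: u, v & nseq (M - 2) zr] = M by rewrite /= size_nseq; lia.
exact: (h_perm size_uv (perm_swap _ _ _) zr).1.
Qed.

Lemma inv_uniq u v v' : inv u v -> inv u v' -> v = v'.
Proof. by have [w [_ uniq_w]] := inv_exists_unique u => /uniq_w -> /uniq_w ->. Qed.

Lemma h_mulr s w b : size s = M -> h s w -> h [seq mul x b | x <- s] (mul w b).
Proof.
move=> size_s hsw.
have size_us : size [:: zr, b & nseq n' one] = N by rewrite /= size_nseq.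
by apply: (k_distr (i := 0) size_us size_s isT (mul w b)).1; exists w.
Qed.

Lemma inv_mulr x v b : inv x v -> inv (mul x b) (mul v b).
Proof.
move/(h_mulr b); rewrite /= size_nseq mul0r map_nseq mul0r.
by apply; lia.
Qed.

Lemma inv_seq s : exists2 t, size t = size s &
  forall j, j < size s -> inv (nth zr s j) (nth zr t j).
Proof.
elim: s => [|a s [t size_t inv_t]]; first by exists [::].
have [v [inv_v _]] := inv_exists_unique a.
by exists (v :: t) => [|[|j] //= /inv_t]; rewrite /= ?size_t.
Qed.

(* An equivalent, intersection-friendly description of hyperideals: the
   reproduction axiom of [subhypergroup] is traded for closure under inverses. *)
Definition ideal_closed (I : H -> Prop) : Prop :=
  [/\ I zr, forall x v, I x -> inv x v -> I v,
      forall s, size s = M -> (forall j, j < M -> I (nth zr s j)) ->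
        forall w, h s w -> I w
    & forall x y, I x -> I (mul x y)].

Lemma ideal_closed_reproduction I s : ideal_closed I -> size s = M ->
  (forall j, j < M -> I (nth zr s j)) -> forall i, i < M ->
  forall w, I w <-> exists y, I y /\ h (set_nth zr s i y) w.
Proof.
move=> [_ I_inv I_h _] size_s I_s i lt_iM w; have lt_is : i < size s by rewrite size_s.
have size_set y : size (set_nth zr s i y) = M by rewrite size_set_nth_lt.
split=> [Iw | [y [Iy hyw]]]; last first.
  apply: (I_h _ (size_set y) _ _ hyw) => j lt_jM.
  by rewrite nth_set_nth /=; case: eqP => _; [exact: Iy | exact: I_s].
have [t size_t inv_t] := inv_seq s; rewrite size_s in size_t inv_t.
have [v [inv_wv _]] := inv_exists_unique w.
pose l := w :: (take i t ++ drop i.+1 t).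
pose l' := v :: (take i s ++ drop i.+1 s).
have size_l : size l = M by rewrite /= size_cat size_take size_drop size_t lt_iM; lia.
have size_l' : size l' = M by rewrite /= size_cat size_take size_drop size_s lt_iM; lia.
have skip_lt j : j < m'.+1 -> (if j < i then j else j.+1) < M by case: ifP => _; lia.
have [y hly] := h_nonempty size_l.
exists y; split.
  apply: (I_h _ size_l _ _ hly) => -[|j] lt_jM //=.
  have lt_idx := skip_lt _ lt_jM.
  by rewrite nth_take_cat_dropS; exact: I_inv (I_s _ lt_idx) (inv_t _ lt_idx).
have inv_ll' j : j < M -> inv (nth zr l j) (nth zr l' j).
  by case: j => [|j] lt_jM //=; rewrite !nth_take_cat_dropS; apply/inv_sym/inv_t/skip_lt.
have := h_reversible size_l size_l' inv_ll' hly (i := 0) isT.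
by rewrite /= drop0 => /(h_perm (size_set y) (perm_set_nth zr y lt_is) w).2.
Qed.

Lemma hyperidealP I : hyperideal M N h k zr I <-> ideal_closed I.
Proof.
split=> [[[x0 Ix0] [[I_h I_rep] I_k]] | closedI].
  have I0 : I zr.
    have := I_k (nseq N zr) 1 x0; rewrite size_nseq => /(_ erefl isT Ix0) /=.
    by rewrite k_zero //= size_nseq subn1.
  split=> // [x v Ix inv_xv | x y Ix].
    have size_s : size (x :: nseq m'.+1 zr) = M by rewrite /= size_nseq.
    have I_s j : j < M -> I (nth zr (x :: nseq m'.+1 zr) j).
      by case: j => [|[|j]] //= _; rewrite nth_nseq; case: ifP.
    have [y [Iy inv_xy]] := (I_rep _ size_s I_s 1 isT zr).1 I0.
    have inv_xy' : inv x y by rewrite /is_inv (_ : M - 2 = m') //; lia.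
    by rewrite (inv_uniq inv_xv inv_xy').
  by have := I_k [:: zr, y & nseq n' one] 0 x; rewrite /= size_nseq; apply.
have [I0 _ I_h I_mul] := closedI.
split; first by exists zr.
split; first by split=> [|s]; [exact: I_h | exact: ideal_closed_reproduction].
move=> us i x size_us lt_iN Ix; have lt_ius : i < size us by rewrite size_us.
rewrite k_prod ?size_set_nth_lt // (prod_perm (perm_set_nth zr x lt_ius)) /=.
exact: I_mul.
Qed.

Lemma ideal_closed_full I : ideal_closed I -> I one -> forall u, I u.
Proof. by case=> _ _ _ I_mul I1 u; rewrite -(mulr1 u) mulC; apply: I_mul. Qed.

Lemma prod_mem_split (P : H -> Prop) : ~ P one ->
  (forall a b, P (mul a b) -> P a \/ P b) ->
  forall s, P (prod s) -> exists2 i, i < size s & P (nth zr s i).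
Proof.
move=> notP1 P_mul; elim=> [/notP1 // | a s IHs /P_mul[Pa | /IHs[i lt_is Pi]]].
  by exists 0.
by exists i.+1.
Qed.

Lemma nary_primeP P : nary_prime M N h k zr P <->
  [/\ ideal_closed P, ~ P one & forall a b, P (mul a b) -> P a \/ P b].
Proof.
split=> [[/hyperidealP closedP [[u notPu] P_k]] | [closedP notP1 P_mul]].
  have notP1 : ~ P one by move/(ideal_closed_full closedP)/(_ u).
  split=> // a b Pab.
  have size_ab : size [:: a, b & nseq n' one] = N by rewrite /= size_nseq.
  have [[|[|i]] lt_iN] := P_k _ size_ab Pab; [by left | by right |].
  by rewrite /= nth_nseq (_ : i < n') //; lia.
split; first exact/hyperidealP.
split; first by exists one.
by move=> s size_s; rewrite k_prod // -size_s; apply: prod_mem_split.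
Qed.

Lemma ideal_closed_colon A b : ideal_closed A -> ideal_closed (fun x => A (mul x b)).
Proof.
case=> A0 A_inv A_h A_mul; split=> [|x v Ax inv_xv|s size_s A_s w hsw|x y Ax].
- by rewrite mul0r.
- exact: A_inv Ax (inv_mulr b inv_xv).
- apply: (A_h _ _ _ _ (h_mulr b size_s hsw)); first by rewrite size_map.
  by move=> j lt_jM; rewrite (nth_map zr) ?size_s //; apply: A_s.
- by rewrite -mulA (mulC y) mulA; apply: A_mul.
Qed.

Section PrimeAvoidance.
Variables (E S : H -> Prop).
Hypothesis S_mul : forall x y, S x -> S y -> S (mul x y).

Definition separating_ideal A :=
  [/\ ideal_closed A, forall x, E x -> A x & forall x, A x -> ~ S x].

Lemma chain_seq_bound (F : (H -> Prop) -> Prop) (s : seq H) A0 :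
  F A0 -> classical_sets.total_on F classical_sets.subset ->
  (forall j, j < size s -> exists2 A, F A & A (nth zr s j)) ->
  exists2 A, F A & forall j, j < size s -> A (nth zr s j).
Proof.
move=> FA0 totF; elim: s => [|a s IHs] s_in; first by exists A0.
have [Aa FAa Aa_a] := s_in 0 isT.
have [//|A FA A_s] := IHs; first by move=> j; apply: (s_in j.+1).
case: (totF _ _ FAa FA) => [sub | sub].
  by exists A => // -[_ | j /A_s //]; apply: sub.
by exists Aa => // -[_ // | j /A_s]; apply: sub.
Qed.

Lemma separating_ideal_chain (F : (H -> Prop) -> Prop) A0 :
  F A0 -> (forall A, F A -> separating_ideal A) ->
  classical_sets.total_on F classical_sets.subset ->
  separating_ideal (fun u => exists2 A, F A & A u).
Proof.
move=> FA0 sepF totF; have [[A0_zr _ _ _] EA0 _] := sepF _ FA0.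
split=> [|x Ex|x [A FA Ax]]; last 2 first.
- by exists A0 => //; apply: EA0.
- by have [_ _ disjA] := sepF _ FA; apply: disjA.
split=> [|x v [A FA Ax] inv_xv|s size_s s_in w hsw|x y [A FA Ax]].
- by exists A0; last exact: A0_zr.
- by exists A => //; have [[_ A_inv _ _] _ _] := sepF _ FA; apply: A_inv inv_xv.
- have [|A FA A_s] := chain_seq_bound FA0 totF (s := s); first by rewrite size_s.
  exists A => //; have [[_ _ A_h _] _ _] := sepF _ FA.
  by apply: (A_h _ size_s _ _ hsw) => j; rewrite -size_s; apply: A_s.
- by exists A => //; have [[_ _ _ A_mul] _ _] := sepF _ FA; apply: A_mul.
Qed.

Lemma maximal_separating_prime A s0 : S s0 -> separating_ideal A ->
  (forall B, separating_ideal B -> (forall x, A x -> B x) -> forall x, B x -> A x) ->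
  nary_prime M N h k zr A.
Proof.
move=> Ss0 [closedA EA disjA] maxA; have [_ _ _ A_mul] := closedA.
have colon a b : A (mul a b) -> ~ A a -> exists2 s, S s & A (mul s b).
  move=> Aab notAa; apply: NNPP => noS; apply/notAa/(maxA (fun x => A (mul x b))) => //.
  - split=> [|x /EA/A_mul //|x Axb Sx]; first exact: ideal_closed_colon.
    by apply: noS; exists x.
  - by move=> x /A_mul.
apply/nary_primeP; split=> // [/(ideal_closed_full closedA)/(_ s0)/disjA // | a b Aab].
apply: NNPP => /not_or_and[notAa notAb].
have [s1 Ss1] := colon _ _ Aab notAa; rewrite mulC => Abs1.
have [s2 Ss2 /disjA] := colon _ _ Abs1 notAb.
by apply; apply: S_mul.
Qed.

(* [Zorn_bigcup] needs the union of the empty chain, i.e. the empty set, to be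
   admissible as well. *)
Lemma exists_prime_avoiding s0 : S s0 -> hyperideal M N h k zr E ->
  (forall x, E x -> ~ S x) ->
  exists2 Q, nary_prime M N h k zr Q & separating_ideal Q.
Proof.
move=> Ss0 /hyperidealP closedE disjE.
pose adm A := (forall x, ~ A x) \/ separating_ideal A.
have [A [admA maxA]] : exists A, adm A /\ forall B, classical_sets.proper A B -> ~ adm B.
  apply: classical_sets.Zorn_bigcup => F admF totF.
  case: (classic (exists2 A0, F A0 & separating_ideal A0)) => [[A0 FA0 sepA0] | noSep].
    pose F' A := F A /\ separating_ideal A.
    have -> : classical_sets.bigcup F id = (fun u => exists2 A, F' A & A u).
      apply/classical_sets.seteqP; split=> x /= [A FA Ax]; last by exists A; first case: FA.
      by exists A => //; split=> //; case: (admF _ FA) => // /(_ x).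
    right; apply: (separating_ideal_chain (A0 := A0)) => [|A []//|A B [FA _] [FB _]] //.
    exact: totF.
  left=> x [A FA Ax]; case: (admF _ FA) => [/(_ x) // | sepA].
  by apply: noSep; exists A.
have sepA : separating_ideal A.
  case: admA => // emptyA; exfalso; have [E0 _ _ _] := closedE.
  apply: (maxA E); last by right.
  by split=> [x /emptyA // | /(_ zr E0) /emptyA].
exists A => //; apply: (maximal_separating_prime Ss0 sepA) => B sepB subAB x Bx.
apply: NNPP => notAx; apply: (maxA B); last by right.
by split=> // /(_ x Bx).
Qed.

End PrimeAvoidance.

Lemma rad_ideal_closed E : ideal_closed (rad M N h k zr E).
Proof.
split=> [P /nary_primeP[[P0 _ _ _] _ _] _ // | x v Rx inv_xv P primeP EP
        | s size_s R_s w hsw P primeP EP | x y Rx P primeP EP];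
  have [[_ P_inv P_h P_mul] _ _] := (nary_primeP P).1 primeP.
- exact: P_inv (Rx P primeP EP) inv_xv.
- by apply: (P_h _ size_s _ _ hsw) => j lt_jM; apply: R_s.
- exact: P_mul (Rx P primeP EP).
Qed.

Lemma rad_proper E : hyperideal M N h k zr E -> proper_subset E -> ~ rad M N h k zr E one.
Proof.
move=> hypE [u notEu] R1.
have one_mul x y : x = one -> y = one -> mul x y = one by move=> -> ->; rewrite mulr1.
have disjE x : E x -> x <> one.
  move=> Ex x1; rewrite x1 in Ex.
  exact/notEu/(ideal_closed_full ((hyperidealP E).1 hypE) Ex).
have [Q primeQ [_ EQ disjQ]] := exists_prime_avoiding one_mul (erefl one) hypE disjE.
exact: disjQ (R1 Q primeQ EQ) erefl.
Qed.

Section EndoPrime.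
Variables (th : H -> H) (E : H -> Prop).
Hypothesis endo_th : endomorphism M N h k one th.

Lemma endomorphism_mul a b : th (mul a b) = mul (th a) (th b).
Proof.
have [_ [th_k th1]] := endo_th.
by rewrite /mul th_k /= ?map_nseq ?th1 // size_nseq.
Qed.

Definition dominates y u :=
  forall P, nary_prime M N h k zr P -> (forall x, E x -> P x) -> P y -> P u.

Lemma dominates_mul a b u : dominates a u -> dominates b u -> dominates (mul a b) u.
Proof.
move=> dom_a dom_b P primeP EP; have [_ _ P_mul] := (nary_primeP P).1 primeP.
by case/P_mul; [exact: dom_a | exact: dom_b].
Qed.

Local Notation mulz s t := [seq mul p.1 p.2 | p <- zip s t].

Lemma k_mulz s t : size s = N -> size t = N -> k (mulz s t) = mul (k s) (k t).
Proof.
move=> size_s size_t; rewrite !k_prod ?prod_zip ?size_map ?size_zip ?size_s ?size_t //.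
exact: minnn.
Qed.

Lemma set_nth_mulz s t i : size s = size t -> i < size s ->
  set_nth zr (mulz s t) i one = mulz (set_nth zr s i one) (set_nth zr t i one).
Proof.
elim: s t i => [|x s IHs] [|y t] [|i] //=; first by rewrite mulr1.
by case=> size_st lt_is; rewrite IHs.
Qed.

Definition endo_dominated us x := exists2 vs, size vs = N & x = k vs /\
  forall i, i < N -> dominates (nth zr vs i) (nth zr us i) /\
    dominates (th (k (set_nth zr vs i one))) (th (k (set_nth zr us i one))).

Lemma endo_dominated_mul us x y :
  endo_dominated us x -> endo_dominated us y -> endo_dominated us (mul x y).
Proof.
move=> [vs size_vs [-> dom_vs]] [ws size_ws [-> dom_ws]].
exists (mulz vs ws); first by rewrite size_map size_zip size_vs size_ws minnn.
split=> [|i lt_iN]; first by rewrite k_mulz.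
have [dom_v dom_v'] := dom_vs i lt_iN; have [dom_w dom_w'] := dom_ws i lt_iN.
have size_set t : size t = N -> size (set_nth zr t i one) = N.
  by move=> size_t; rewrite size_set_nth_lt // size_t.
split.
  rewrite (nth_map (zr, zr)) ?size_zip ?size_vs ?size_ws ?minnn // nth_zip ?size_vs //.
  exact: dominates_mul.
rewrite set_nth_mulz ?size_vs ?size_ws // k_mulz ?size_set // endomorphism_mul.
exact: dominates_mul.
Qed.

Lemma endo_dominated_refl us : size us = N -> endo_dominated us (k us).
Proof. by exists us => //; split=> // i _; split=> P _ _. Qed.

Lemma endo_dominated_in_rad us x : endo_prime M N h k zr one th E ->
  E x -> endo_dominated us x -> exists2 i, i < N &
    rad M N h k zr E (nth zr us i) \/ rad M N h k zr E (th (k (set_nth zr us i one))).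
Proof.
move=> [_ [_ epE]] Ex [vs size_vs [x_eq dom_vs]]; rewrite x_eq in Ex.
have [i lt_iN Ei] := epE vs size_vs Ex; have [dom_v dom_v'] := dom_vs i lt_iN.
exists i => //; case: Ei => [Ev | Ev']; [left | right] => P primeP EP.
- exact: dom_v primeP EP (EP _ Ev).
- exact: dom_v' primeP EP (EP _ Ev').
Qed.

Lemma rad_endo_prime : endo_prime M N h k zr one th E ->
  endo_prime M N h k zr one th (rad M N h k zr E).
Proof.
move=> epE; have [hypE [properE _]] := epE.
split; first exact/hyperidealP/rad_ideal_closed.
split; first by exists one; exact: rad_proper hypE properE.
move=> us size_us R_us; apply: NNPP => noWitness.
have disjE x : E x -> ~ endo_dominated us x.
  by move=> Ex /(endo_dominated_in_rad epE Ex) [i lt_iN Ri]; apply: noWitness; exists i.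
have [Q primeQ [_ EQ disjQ]] :=
  exists_prime_avoiding (@endo_dominated_mul us) (endo_dominated_refl size_us) hypE disjE.
exact: disjQ (R_us Q primeQ EQ) (endo_dominated_refl size_us).
Qed.

End EndoPrime.

End KrasnerHyperring.

Theorem mainTheorem1 (H : Type) (m n : nat) (h : seq H -> H -> Prop)
  (k : seq H -> H) (zr one : H) (th : H -> H) (E : H -> Prop) :
  1 < m -> 1 < n ->
  krasner_hyperring m n h k zr one ->
  endomorphism m n h k one th ->
  hyperideal m n h k zr E -> proper_subset E ->
  endo_prime m n h k zr one th E ->
  endo_prime m n h k zr one th (rad m n h k zr E).
Proof.
case: m => [|[|m']] // _; case: n => [|[|n']] // _ hyperring endo_th _ _.
exact: (rad_endo_prime hyperring endo_th).
Qed.
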